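(* Consider a discounted Markov decision process with finite state space $\mathcal S$, finite action space $\mathcal A$, transition probabilities $\mathcal P(s'\mid s,a)$, reward function $R:\mathcal S\times\mathcal A\to[0,1]$, discount factor $\gamma\in[0,1)$ and initial state distribution $p$. For a policy $\pi\in\mathcal X:=\Delta(\mathcal A)^{|\mathcal S|}$ (viewed as a matrix $(\pi_{sa})\in\mathbb R^{|\mathcal S|\times|\mathcal A|}$ whose rows $\pi_s$ are probability vectors), let $V_p(\pi):=-\mathbb E\big[\sum_{h=0}^\infty\gamma^hR(s_h,a_h)\big]$, where $s_0\sim p$, $a_h\sim\pi_{s_h}$, $s_{h+1}\sim\mathcal P(\cdot\mid s_h,a_h)$. Then for any $\pi,\pi'\in\mathcal X$, $$\|\nabla V_p(\pi)-\nabla V_p(\pi')\|_{2,\infty}\le\frac{2\gamma}{(1-\gamma)^3}\|\pi-\pi'\|_{2,1}.$$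
   Context: For a matrix $M\in\mathbb R^{|\mathcal S|\times|\mathcal A|}$: $\|M\|_{2,1}^2:=\sum_{s\in\mathcal S}\big(\sum_{a\in\mathcal A}|M_{sa}|\big)^2$ and $\|M\|_{2,\infty}^2:=\sum_{s\in\mathcal S}\big(\max_{a\in\mathcal A}|M_{sa}|\big)^2$. $\Delta(\mathcal A)$ is the probability simplex on $\mathcal A$; $\nabla V_p(\pi)$ is the gradient with respect to the entries $\pi_{sa}$. *)

From HB Require Import structures.
From mathcomp Require Import all_boot all_order all_algebra.
From mathcomp Require Import all_classical all_reals all_analysis.
Set Implicit Arguments. Unset Strict Implicit. Unset Printing Implicit Defensive.
Import Order.TTheory GRing.Theory Num.Theory.
Import numFieldNormedType.Exports.
Local Open Scope ring_scope.

Section MDP.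
Variables (R : realType) (nS nA : nat).

(* transition kernel P s a s' = P(s' | s, a) *)
Definition is_kernel (P : 'I_nS -> 'I_nA -> 'I_nS -> R) : Prop :=
  (forall s a s', 0 <= P s a s') /\ (forall s a, \sum_(s' < nS) P s a s' = 1).

Definition is_distr (p : 'rV[R]_nS) : Prop :=
  (forall s, 0 <= p 0 s) /\ \sum_(s < nS) p 0 s = 1.

Definition is_policy (pi : 'M[R]_(nS, nA)) : Prop :=
  (forall s a, 0 <= pi s a) /\ (forall s, \sum_(a < nA) pi s a = 1).

Definition Ppi (P : 'I_nS -> 'I_nA -> 'I_nS -> R) (pi : 'M[R]_(nS, nA)) : 'M[R]_nS :=
  \matrix_(s, s') \sum_(a < nA) pi s a * P s a s'.

Definition rpi (Rw : 'I_nS -> 'I_nA -> R) (pi : 'M[R]_(nS, nA)) : 'cV[R]_nS :=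
  \col_s \sum_(a < nA) pi s a * Rw s a.

(* E[R(s_h,a_h)] = p (P_pi)^h r_pi ; V_p(pi) = - sum_h gamma^h E[R(s_h,a_h)].
   Defined by the same formula for every matrix pi, so that partial
   derivatives in the entries pi_sa make sense. *)
Definition Vp (P : 'I_nS -> 'I_nA -> 'I_nS -> R) (Rw : 'I_nS -> 'I_nA -> R)
  (gamma : R) (p : 'rV[R]_nS) (pi : 'M[R]_(nS, nA)) : R :=
  let u : R ^nat := fun h : nat => gamma ^+ h * (p *m (Ppi P pi) ^+ h *m rpi Rw pi) 0 0 in
  - limn (series u).

Definition gradVp P Rw gamma p (pi : 'M[R]_(nS, nA)) : 'M[R]_(nS, nA) :=
  \matrix_(s, a) derive1 (fun t : R => Vp P Rw gamma p (pi + t *: delta_mx s a)) 0.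

Definition norm21 (M : 'M[R]_(nS, nA)) : R :=
  Num.sqrt (\sum_(s < nS) (\sum_(a < nA) `|M s a|) ^+ 2).

Definition norm2inf (M : 'M[R]_(nS, nA)) : R :=
  Num.sqrt (\sum_(s < nS) (\big[Num.max/0]_(a < nA) `|M s a|) ^+ 2).

End MDP.

(* Write A := Ppi pi, X := (1 - gamma A)^-1 and r := rpi pi; summing the Neumann
   series gives V_p(pi) = - p X r.  Along the line pi + t e_sa the matrix A moves
   by the rank-one matrix t e_s P(.|s,a), so by Sherman-Morrison V_p is a rational
   function of t near 0, and differentiating at 0 gives the policy-gradient formula
     dV_p/dpi_sa = - d_s Q(s,a),  with  d := p X,  Q(s,a) := R(s,a) + gamma P(.|s,a) X r.
   Since gamma A is a contraction for the l1 norm of rows and the sup norm of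
   columns, |d|_1 <= 1/(1-gamma) and |Q| <= 1/(1-gamma).  Subtracting the
   fixed-point equations d = p + gamma d A and X r = r + gamma A X r for pi and pi',
   and bounding every row l1 norm of pi - pi' by N := |pi - pi'|_{2,1}, gives
   |d - d'|_1 <= gamma N/(1-gamma)^2 and |Q - Q'| <= gamma N/(1-gamma)^2.  Hence
     sum_s max_a |grad - grad'| <= |d - d'|_1 |Q|_oo + |d'|_1 |Q - Q'|_oo
                                <= 2 gamma N/(1-gamma)^3,
   and the (2,oo) norm is bounded by this l1 sum. *)

From HB Require Import structures.
From mathcomp Require Import all_boot all_order all_algebra.
From mathcomp Require Import all_classical all_reals all_analysis.
From mathcomp Require Import ring lra.
Import Order.TTheory GRing.Theory Num.Theory.
Import numFieldNormedType.Exports.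
Local Open Scope ring_scope.
Set Implicit Arguments. Unset Strict Implicit.

Lemma mxBE (R : zmodType) m n (A B : 'M[R]_(m, n)) i j : (A - B) i j = A i j - B i j.
Proof. by rewrite !mxE. Qed.

Lemma norm1_mulmx_le (R : realFieldType) m k (B : 'M[R]_(m, k)) (b : R) (x : 'rV[R]_m) :
  (forall i, \sum_j `|B i j| <= b) ->
  \sum_j `|(x *m B) 0 j| <= b * \sum_i `|x 0 i|.
Proof.
move=> Bb; apply: le_trans (_ : \sum_j \sum_i `|x 0 i| * `|B i j| <= _).
  apply: ler_sum => j _; rewrite mxE; apply: le_trans (ler_norm_sum _ _ _) _.
  by apply: ler_sum => i _; rewrite normrM.
rewrite exchange_big /= mulr_sumr; apply: ler_sum => i _.
by rewrite -mulr_sumr mulrC ler_wpM2r.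
Qed.

Lemma abs_mulmx_le (R : realFieldType) n (x : 'rV[R]_n) (w : 'cV[R]_n) :
  `|(x *m w) 0 0| <= (\sum_i `|x 0 i|) * (\sum_i `|w i 0|).
Proof.
rewrite mxE mulr_suml; apply: le_trans (ler_norm_sum _ _ _) _.
apply: ler_sum => i _; rewrite normrM ler_wpM2l //.
by rewrite (bigD1 i) //= lerDl sumr_ge0.
Qed.

Section StochasticMatrix.
Variables (R : realFieldType) (n : nat).

Definition row_stochastic (A : 'M[R]_n) :=
  (forall i j, 0 <= A i j) /\ (forall i, \sum_j A i j = 1).

Lemma norm1_fixpoint_le (A : 'M[R]_n) (g : R) (e y : 'rV[R]_n) :
  row_stochastic A -> 0 <= g -> g < 1 -> e = y + g *: (e *m A) ->
  \sum_j `|e 0 j| <= (\sum_j `|y 0 j|) / (1 - g).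
Proof.
move=> [A0 A1] g0 g1 eE.
have A_le1 i : \sum_j `|A i j| <= 1.
  by rewrite -(A1 i); apply: ler_sum => j _; rewrite ger0_norm.
have : \sum_j `|e 0 j| <= \sum_j `|y 0 j| + g * \sum_j `|e 0 j|.
  rewrite {1}eE; apply: le_trans (_ : _ <= \sum_j (`|y 0 j| + g * `|(e *m A) 0 j|)) _.
    apply: ler_sum => j _; rewrite !mxE; apply: le_trans (ler_normD _ _) _.
    by rewrite normrM ger0_norm.
  rewrite big_split /= lerD2l -mulr_sumr ler_wpM2l //.
  by apply: le_trans (norm1_mulmx_le _ A_le1) _; rewrite mul1r.
by rewrite ler_pdivlMr ?subr_gt0 // mulrBr mulr1 lerBlDr mulrC.
Qed.

Lemma norminf_fixpoint_le (A : 'M[R]_n) (g B : R) (v z : 'cV[R]_n) :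
  row_stochastic A -> 0 <= g -> g < 1 -> 0 <= B -> (forall i, `|z i 0| <= B) ->
  v = z + g *: (A *m v) -> forall i, `|v i 0| <= B / (1 - g).
Proof.
move=> [A0 A1] g0 g1 B0 zB vE.
set M := \big[Num.max/0]_i `|v i 0|.
have vM i : `|v i 0| <= M by exact: le_bigmax.
have M0 : 0 <= M by exact: bigmax_ge_id.
have : M <= B + g * M.
  apply: bigmax_le => [|i _]; first by rewrite addr_ge0 // mulr_ge0.
  rewrite {1}vE !mxE; apply: le_trans (ler_normD _ _) _; apply: lerD => //.
  rewrite normrM ger0_norm // ler_wpM2l //; apply: le_trans (ler_norm_sum _ _ _) _.
  rewrite -[M]mul1r -(A1 i) mulr_suml; apply: ler_sum => j _.
  by rewrite normrM ger0_norm // ler_wpM2l.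
move=> MB i; apply: le_trans (vM i) _.
by rewrite ler_pdivlMr ?subr_gt0 // mulrBr mulr1 lerBlDr mulrC.
Qed.

Lemma stochastic_resolvent_unit (A : 'M[R]_n) (g : R) :
  row_stochastic A -> 0 <= g -> g < 1 -> 1%:M - g *: A \in unitmx.
Proof.
move=> sA g0 g1; rewrite -row_free_unit -kermx_eq0.
apply/eqP/matrixP => i j; rewrite [RHS]mxE.
set x := row i (kermx (1%:M - g *: A)).
have xA : x = 0 + g *: (x *m A).
  have : x *m (1%:M - g *: A) = 0 by rewrite -row_mul mulmx_ker row0.
  by rewrite mulmxBr mulmx1 -scalemxAr add0r => /eqP; rewrite subr_eq0 => /eqP.
have := norm1_fixpoint_le sA g0 g1 xA.
rewrite [X in _ <= X / _]big1 => [|k _]; last by rewrite mxE normr0.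
rewrite mul0r => x0.
have x_0 : \sum_k `|x 0 k| = 0 by apply/eqP; rewrite eq_le x0 sumr_ge0.
have := @psumr_eq0P _ _ _ _ (fun k _ => normr_ge0 (x 0 k)) x_0 j isT.
by move/normr0_eq0; rewrite mxE.
Qed.

Lemma fixpoint_sub (A A' : 'M[R]_n) (g : R) (r r' v v' : 'cV[R]_n) :
  v = r + g *: (A *m v) -> v' = r' + g *: (A' *m v') ->
  v - v' = r - r' + g *: ((A - A') *m v') + g *: (A *m (v - v')).
Proof.
move=> vE v'E; rewrite {1}vE {1}v'E mulmxBl mulmxBr !scalerBr.
by apply/matrixP => i j; rewrite !mxE; ring.
Qed.

Lemma row_fixpoint_sub (A A' : 'M[R]_n) (g : R) (x d d' : 'rV[R]_n) :
  d = x + g *: (d *m A) -> d' = x + g *: (d' *m A') ->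
  d - d' = g *: (d *m (A - A')) + g *: ((d - d') *m A').
Proof.
move=> dE d'E; rewrite {1}dE {1}d'E mulmxBl mulmxBr !scalerBr.
by apply/matrixP => i j; rewrite !mxE; ring.
Qed.

End StochasticMatrix.

Lemma sherman_morrison (F : fieldType) n (M X : 'M[F]_n) (u : 'cV[F]_n) (v : 'rV[F]_n) :
  M *m X = 1%:M -> (v *m X *m u) 0 0 != 1 ->
  (M - u *m v) *m (X + (1 - (v *m X *m u) 0 0)^-1 *: (X *m u *m v *m X)) = 1%:M.
Proof.
move=> MX c1; set c := (v *m X *m u) 0 0; set k := (1 - c)^-1.
have uvXu : u *m v *m X *m u = c *: u.
  by rewrite -!mulmxA (mulmxA v) [v *m X *m u]mx11_scalar mul_mx_scalar.
have kc : k - 1 - k * c = 0 by rewrite /k; field; rewrite subr_eq0 eq_sym.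
rewrite mulmxBl !mulmxDr -!scalemxAr !mulmxA MX !mul1mx uvXu -!scalemxAl -!mulmxA.
set w := u *m (v *m X); rewrite -addrA.
have -> : k *: w - (w + k *: (c *: w)) = (k - 1 - k * c) *: w.
  by rewrite !scalerBl scale1r scalerA opprD addrA.
by rewrite kc scale0r addr0.
Qed.

Lemma mulmx_rank1_updateE (R : comPzRingType) n (X : 'M[R]_n) (k : R)
    (x v : 'rV[R]_n) (u y : 'cV[R]_n) :
  (x *m (X + k *: (X *m u *m v *m X)) *m y) 0 0
  = (x *m X *m y) 0 0 + k * (x *m X *m u) 0 0 * (v *m X *m y) 0 0.
Proof.
rewrite mulmxDr mulmxDl mxE; congr (_ + _).
rewrite -scalemxAr -scalemxAl mxE -mulrA.
rewrite (_ : x *m _ *m y = (x *m X *m u) *m (v *m X *m y)); last by rewrite !mulmxA.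
by rewrite [(_ *m _) 0 0]mxE big_ord1.
Qed.

Section NeumannSeries.
Variables (R : realType) (n : nat).

Lemma exprZmx (B : 'M[R]_n) (g : R) k : (g *: B) ^+ k = g ^+ k *: B ^+ k.
Proof.
elim: k => [|k IH]; first by rewrite !expr0 scale1r.
by rewrite !exprSr -!mulmxE IH -scalemxAl -scalemxAr scalerA.
Qed.

Lemma sum_expr_mulmx_subr (B : 'M[R]_n) k :
  (\sum_(h < k) B ^+ h) *m (1%:M - B) = 1%:M - B ^+ k.
Proof.
elim: k => [|k IH]; first by rewrite big_ord0 mul0mx expr0 subrr.
by rewrite big_ord_recr /= mulmxDl IH mulmxBr mulmx1 exprSr mulmxE addrA subrK.
Qed.

Lemma norm1_mulmx_expr_le (B : 'M[R]_n) (b : R) (x : 'rV[R]_n) k :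
  0 <= b -> (forall i, \sum_j `|B i j| <= b) ->
  \sum_j `|(x *m B ^+ k) 0 j| <= b ^+ k * \sum_j `|x 0 j|.
Proof.
move=> b0 Bb; elim: k => [|k IH]; first by rewrite expr0 mulmx1 mul1r.
rewrite exprSr -mulmxE mulmxA; apply: le_trans (norm1_mulmx_le _ Bb) _.
by rewrite exprS -mulrA ler_wpM2l.
Qed.

Lemma cvg_mulmx_expr0 (B : 'M[R]_n) (b : R) (x : 'rV[R]_n) (w : 'cV[R]_n) :
  0 <= b -> b < 1 -> (forall i, \sum_j `|B i j| <= b) ->
  ((x *m B ^+ k *m w) 0 0 @[k --> \oo] --> 0)%classic.
Proof.
move=> b0 b1 Bb; set C := (\sum_j `|x 0 j|) * (\sum_j `|w j 0|).
have bound k : `|(x *m B ^+ k *m w) 0 0| <= b ^+ k * C.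
  apply: le_trans (abs_mulmx_le _ _) _.
  by rewrite mulrA ler_wpM2r ?sumr_ge0 // norm1_mulmx_expr_le.
have bk0 : (b ^+ k * C @[k --> \oo] --> 0)%classic.
  by rewrite -(mul0r C); apply: cvgMr_tmp; apply: cvg_expr; rewrite ger0_norm.
apply: (squeeze_cvgr (f := fun k => - (b ^+ k * C)) (h := fun k => b ^+ k * C)).
- by near=> k; rewrite -ler_norml bound.
- by rewrite -oppr0; apply: cvgN.
- exact: bk0.
Unshelve. all: by end_near.
Qed.

Lemma lim_series_resolvent (B Y : 'M[R]_n) (g b : R) (x : 'rV[R]_n) (w : 'cV[R]_n) :
  0 <= g -> 0 <= b -> g * b < 1 -> (forall i, \sum_j `|B i j| <= b) ->
  (1%:M - g *: B) *m Y = 1%:M ->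
  limn (series (fun h : nat => g ^+ h * (x *m B ^+ h *m w) 0 0)) = (x *m Y *m w) 0 0.
Proof.
move=> g0 b0 gb1 Bb BY.
have partial k : series (fun h : nat => g ^+ h * (x *m B ^+ h *m w) 0 0) k
    = (x *m Y *m w) 0 0 - (x *m (g *: B) ^+ k *m (Y *m w)) 0 0.
  rewrite seriesEord /=.
  have -> : \sum_(h < k) g ^+ h * (x *m B ^+ h *m w) 0 0
      = (x *m (\sum_(h < k) (g *: B) ^+ h) *m w) 0 0.
    rewrite mulmx_sumr mulmx_suml summxE; apply: eq_bigr => h _.
    by rewrite exprZmx -scalemxAr -scalemxAl [RHS]mxE.
  rewrite -[\sum_(h < k) _]mulmx1 -BY (mulmxA (\sum_(h < k) _)) sum_expr_mulmx_subr.
  by rewrite mulmxBl mul1mx mulmxBr mulmxBl !mulmxA !mxE.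
have gBb i : \sum_j `|(g *: B) i j| <= g * b.
  under eq_bigr => j _ do rewrite mxE normrM ger0_norm //.
  by rewrite -mulr_sumr ler_wpM2l.
apply/cvg_lim => //; rewrite (funext partial) -[X in (_ --> X)%classic]subr0.
by apply: cvgB; [exact: cvg_cst | exact: cvg_mulmx_expr0 (mulr_ge0 g0 b0) gb1 gBb].
Qed.

End NeumannSeries.

Section PolicyMatrices.
Variables (R : realType) (nS nA : nat).
Variables (P : 'I_nS -> 'I_nA -> 'I_nS -> R) (Rw : 'I_nS -> 'I_nA -> R).
Implicit Types (pi M N : 'M[R]_(nS, nA)).

Lemma Ppi_stochastic pi : is_kernel P -> is_policy pi -> row_stochastic (Ppi P pi).
Proof.
move=> [P0 P1] [pi0 pi1]; split=> [i j|i].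
  by rewrite mxE sumr_ge0 // => a _; rewrite mulr_ge0.
under eq_bigr => j _ do rewrite mxE.
by rewrite exchange_big -(pi1 i); apply: eq_bigr => a _; rewrite -mulr_sumr P1 mulr1.
Qed.

Lemma abs_rpi_le1 pi : (forall s a, 0 <= Rw s a <= 1) -> is_policy pi ->
  forall i, `|rpi Rw pi i 0| <= 1.
Proof.
move=> Rw01 [pi0 pi1] i; rewrite mxE ger0_norm; last first.
  by rewrite sumr_ge0 // => a _; rewrite mulr_ge0 //; case/andP: (Rw01 i a).
by rewrite -(pi1 i) ler_sum // => a _; rewrite ler_piMr //; case/andP: (Rw01 i a).
Qed.

Lemma PpiD M N : Ppi P (M + N) = Ppi P M + Ppi P N.
Proof.
by apply/matrixP => i j; rewrite !mxE -big_split; apply: eq_bigr => a _; rewrite mxE mulrDl.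
Qed.

Lemma PpiZ (t : R) M : Ppi P (t *: M) = t *: Ppi P M.
Proof.
by apply/matrixP => i j; rewrite !mxE mulr_sumr; apply: eq_bigr => a _; rewrite mxE mulrA.
Qed.

Lemma PpiB M N : Ppi P (M - N) = Ppi P M - Ppi P N.
Proof. by rewrite PpiD -scaleN1r PpiZ scaleN1r. Qed.

Lemma rpiD M N : rpi Rw (M + N) = rpi Rw M + rpi Rw N.
Proof.
by apply/matrixP => i j; rewrite !mxE -big_split; apply: eq_bigr => a _; rewrite mxE mulrDl.
Qed.

Lemma rpiZ (t : R) M : rpi Rw (t *: M) = t *: rpi Rw M.
Proof.
by apply/matrixP => i j; rewrite !mxE mulr_sumr; apply: eq_bigr => a _; rewrite mxE mulrA.
Qed.

Lemma rpiB M N : rpi Rw (M - N) = rpi Rw M - rpi Rw N.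
Proof. by rewrite rpiD -scaleN1r rpiZ scaleN1r. Qed.

Lemma Ppi_delta s a : Ppi P (delta_mx s a) = delta_mx s 0 *m \row_j P s a j.
Proof.
apply/matrixP => i j; rewrite !mxE big_ord1 !mxE eqxx andbT.
have [->|ns] /= := eqVneq i s; last first.
  by rewrite big1 ?mul0r // => b _; rewrite mxE (negbTE ns) mul0r.
rewrite (bigD1 a) //= !mxE !eqxx mul1r big1 ?addr0 ?mul1r // => b /negbTE nb.
by rewrite mxE eqxx nb mul0r.
Qed.

Lemma rpi_delta s a : rpi Rw (delta_mx s a) = Rw s a *: delta_mx s 0.
Proof.
apply/matrixP => i j; rewrite !mxE (ord1 j) eqxx andbT.
have [->|ns] /= := eqVneq i s; last first.
  by rewrite big1 ?mulr0 // => b _; rewrite mxE (negbTE ns) mul0r.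
rewrite (bigD1 a) //= !mxE !eqxx mul1r big1 ?addr0 ?mulr1 // => b /negbTE nb.
by rewrite mxE eqxx nb mul0r.
Qed.

Lemma norm1_row_Ppi_le M i : is_kernel P -> \sum_j `|Ppi P M i j| <= \sum_a `|M i a|.
Proof.
move=> [P0 P1]; apply: le_trans (_ : \sum_j \sum_a `|M i a| * P i a j <= _).
  apply: ler_sum => j _; rewrite mxE; apply: le_trans (ler_norm_sum _ _ _) _.
  by apply: ler_sum => a _; rewrite normrM (ger0_norm (P0 _ _ _)).
by rewrite exchange_big; apply: ler_sum => a _; rewrite -mulr_sumr P1 mulr1.
Qed.

Lemma bellman_rowE (g : R) M (w : 'cV[R]_nS) i :
  (rpi Rw M + g *: (Ppi P M *m w)) i 0
  = \sum_a M i a * (Rw i a + g * \sum_j P i a j * w j 0).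
Proof.
rewrite !mxE; under [in X in _ + _ * X]eq_bigr => j _ do rewrite mxE mulr_suml.
rewrite exchange_big mulr_sumr -big_split /=; apply: eq_bigr => a _.
rewrite mulrDr mulrCA [in RHS]mulr_sumr; congr (_ + _ * _).
by apply: eq_bigr => j _; rewrite mulrA.
Qed.

Lemma abs_kernel_mean_le (w : 'I_nS -> R) (B : R) s a :
  is_kernel P -> (forall j, `|w j| <= B) -> `|\sum_j P s a j * w j| <= B.
Proof.
move=> [P0 P1] wB; apply: le_trans (ler_norm_sum _ _ _) _.
rewrite -[B]mul1r -(P1 s a) mulr_suml; apply: ler_sum => j _.
by rewrite normrM ger0_norm // ler_wpM2l.
Qed.

Lemma norm1_row_add_delta_le pi (t : R) s a i :
  is_policy pi -> \sum_b `|(pi + t *: delta_mx s a) i b| <= 1 + `|t|.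
Proof.
move=> [pi0 pi1].
have delta_le1 : \sum_b delta_mx s a i b <= 1 :> R.
  rewrite (bigD1 a) //= big1 => [|b /negbTE nb]; last by rewrite mxE nb andbF.
  by rewrite addr0 mxE lern1 leq_b1.
apply: le_trans (_ : \sum_b (pi i b + `|t| * delta_mx s a i b) <= _).
  apply: ler_sum => b _; rewrite !mxE; apply: le_trans (ler_normD _ _) _.
  by rewrite ger0_norm // normrM [`|_%:R|]ger0_norm.
by rewrite big_split /= pi1 lerD2l -mulr_sumr ler_piMr.
Qed.

End PolicyMatrices.

Lemma derive1_near_frac (R : realType) (f : R -> R) (a D k : R) :
  (\forall t \near 0, f t = a + t * D / (1 - t * k)) -> derive1 f 0 = D.
Proof.
move=> fE; have f0 : f 0 = a by rewrite (nbhs_singleton fE) !mul0r addr0.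
have cvgD : (D / (1 - h * k) @[h --> 0^'] --> D)%classic.
  suff cv0 : (D / (1 - h * k) @[h --> 0] --> D / (1 - 0 * k))%classic.
    by apply: cvg_within_filter; move: cv0; rewrite mul0r subr0 divr1.
  apply: cvgMl_tmp; apply: cvgV; first by rewrite mul0r subr0 oner_neq0.
  by apply: cvgB; [exact: cvg_cst | apply: cvgMr_tmp; exact: cvg_id].
apply: cvg_lim => //; apply: cvg_trans cvgD; apply: near_eq_cvg; near=> h.
have h0 : h != 0 by near: h; exact: nbhs_dnbhs_neq.
have fh : f h = a + h * D / (1 - h * k) by near: h; exact: nbhs_dnbhs fE.
by rewrite addr0 fh f0 addrAC subrr add0r /GRing.scale /= -!mulrA mulKf.
Unshelve. all: by end_near.
Qed.

Lemma near0_perturbation_bounds (R : realType) (g c : R) : 0 <= g -> g < 1 ->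
  \forall t \near 0, g * (1 + `|t|) < 1 /\ g * t * c != 1.
Proof.
move=> g0 g1.
have small1 : \forall t \near (0 : R), `|t| < 1 - g.
  by apply: nbhs0_lt; rewrite subr_gt0.
have small2 : \forall t \near (0 : R), `|t| < (1 + `|g * c|)^-1.
  by apply: nbhs0_lt; rewrite invr_gt0; have := normr_ge0 (g * c); lra.
near=> t; split.
  have t1 : `|t| < 1 - g by near: t; exact: small1.
  by have := normr_ge0 t; nra.
have t2 : `|t| * (1 + `|g * c|) < 1.
  rewrite -ltr_pdivlMr ?div1r; last by have := normr_ge0 (g * c); lra.
  by near: t; exact: small2.
apply/eqP => tc; have : `|t| * `|g * c| = 1 by rewrite -normrM mulrA (mulrC t) tc normr1.
by have := normr_ge0 t; have := normr_ge0 (g * c); nra.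
Unshelve. all: by end_near.
Qed.

Section PolicyGradient.
Variables (R : realType) (nS nA : nat).
Variables (P : 'I_nS -> 'I_nA -> 'I_nS -> R) (Rw : 'I_nS -> 'I_nA -> R) (gamma : R).

Definition resolvent (pi : 'M[R]_(nS, nA)) : 'M[R]_nS :=
  invmx (1%:M - gamma *: Ppi P pi).

Definition occupancy (p : 'rV[R]_nS) (pi : 'M[R]_(nS, nA)) : 'rV[R]_nS :=
  p *m resolvent pi.

Definition state_value (pi : 'M[R]_(nS, nA)) : 'cV[R]_nS :=
  resolvent pi *m rpi Rw pi.

Definition action_value (pi : 'M[R]_(nS, nA)) s a : R :=
  Rw s a + gamma * \sum_j P s a j * state_value pi j 0.

Hypotheses (kerP : is_kernel P) (Rw01 : forall s a, 0 <= Rw s a <= 1).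
Hypotheses (g0 : 0 <= gamma) (g1 : gamma < 1).
Variables (p : 'rV[R]_nS) (pi : 'M[R]_(nS, nA)).
Hypothesis pol : is_policy pi.

Let resolvent_unit : 1%:M - gamma *: Ppi P pi \in unitmx.
Proof. exact/stochastic_resolvent_unit/g1/g0/Ppi_stochastic. Qed.

Lemma Vp_along_delta s a : exists k : R, \forall t \near 0,
  Vp P Rw gamma p (pi + t *: delta_mx s a)
  = - (occupancy p pi *m rpi Rw pi) 0 0
    + t * - (occupancy p pi 0 s * action_value pi s a) / (1 - t * k).
Proof.
set X := resolvent pi; set es : 'cV[R]_nS := delta_mx s 0; set q := \row_j P s a j.
set c := (q *m X *m es) 0 0; exists (gamma * c).
move: (near0_perturbation_bounds c g0 g1); apply: filterS => t [contract update_ok].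
have rank1_shift : 1%:M - gamma *: Ppi P (pi + t *: delta_mx s a)
    = (1%:M - gamma *: Ppi P pi) - ((gamma * t) *: es) *m q.
  by rewrite PpiD PpiZ Ppi_delta scalerDr scalerA opprD addrA -scalemxAl.
have XesZ (x : 'rV[R]_nS) :
  (x *m X *m ((gamma * t) *: es)) 0 0 = gamma * t * (x *m X *m es) 0 0.
  by rewrite -scalemxAr mxE.
have := @sherman_morrison _ _ _ _ ((gamma * t) *: es) q (mulmxV resolvent_unit).
rewrite -[invmx _]/X -rank1_shift XesZ -/c => /(_ update_ok) inverse_shift.
have row_sum_le i : \sum_j `|Ppi P (pi + t *: delta_mx s a) i j| <= 1 + `|t|.
  exact: le_trans (norm1_row_Ppi_le _ _ kerP) (norm1_row_add_delta_le _ _ _ _ pol).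
rewrite /Vp /= (lim_series_resolvent p _ g0 _ contract row_sum_le inverse_shift) ?addr_ge0 //.
rewrite mulmx_rank1_updateE rpiD rpiZ rpi_delta -/es; set r := rpi Rw pi; set w := Rw s a.
have lin (x : 'rV[R]_nS) :
  (x *m (r + t *: (w *: es))) 0 0 = (x *m r) 0 0 + t * w * (x *m es) 0 0.
  by rewrite mulmxDr -!scalemxAr scalerA !mxE.
have dE : (p *m X *m es) 0 0 = occupancy p pi 0 s by rewrite /es -colE mxE.
have QE : action_value pi s a = w + gamma * (q *m X *m r) 0 0.
  rewrite /action_value -mulmxA [(q *m _) 0 0]mxE; congr (_ + _ * _).
  by apply: eq_bigr => j _; rewrite [q 0 j]mxE.
have denom_neq0 : 1 - t * (gamma * c) != 0 by rewrite mulrCA mulrA subr_eq0 eq_sym.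
rewrite !lin XesZ dE QE -/c /occupancy -/X.
by field.
Qed.

Lemma gradVp_formula s a :
  gradVp P Rw gamma p pi s a = - (occupancy p pi 0 s * action_value pi s a).
Proof.
have [k Vk] := Vp_along_delta s a.
by rewrite mxE (derive1_near_frac Vk).
Qed.

Lemma occupancy_fixpoint :
  occupancy p pi = p + gamma *: (occupancy p pi *m Ppi P pi).
Proof.
have : occupancy p pi *m (1%:M - gamma *: Ppi P pi) = p.
  by rewrite -mulmxA mulVmx // mulmx1.
by rewrite mulmxBr mulmx1 -scalemxAr => /eqP; rewrite subr_eq => /eqP.
Qed.

Lemma state_value_fixpoint :
  state_value pi = rpi Rw pi + gamma *: (Ppi P pi *m state_value pi).
Proof.
have : (1%:M - gamma *: Ppi P pi) *m state_value pi = rpi Rw pi.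
  by rewrite mulmxA mulmxV // mul1mx.
by rewrite mulmxBl mul1mx -scalemxAl => /eqP; rewrite subr_eq => /eqP.
Qed.

Lemma norm1_occupancy_le :
  is_distr p -> \sum_j `|occupancy p pi 0 j| <= (1 - gamma)^-1.
Proof.
move=> [p0 p1]; have := norm1_fixpoint_le (Ppi_stochastic kerP pol) g0 g1 occupancy_fixpoint.
by rewrite (eq_bigr _ (fun j _ => ger0_norm (p0 j))) p1 div1r.
Qed.

Lemma abs_state_value_le i : `|state_value pi i 0| <= (1 - gamma)^-1.
Proof.
rewrite -div1r; apply: norminf_fixpoint_le (Ppi_stochastic kerP pol) g0 g1 ler01 _
  state_value_fixpoint i.
exact: abs_rpi_le1.
Qed.

Lemma abs_action_value_le s a : `|action_value pi s a| <= (1 - gamma)^-1.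
Proof.
have -> : (1 - gamma)^-1 = 1 + gamma * (1 - gamma)^-1.
  by field; rewrite subr_eq0 eq_sym lt_eqF.
apply: le_trans (ler_normD _ _) _; apply: lerD.
  by case/andP: (Rw01 s a) => Rw0 Rw1; rewrite ger0_norm.
rewrite normrM ger0_norm // ler_wpM2l //.
exact: abs_kernel_mean_le kerP abs_state_value_le.
Qed.

End PolicyGradient.

Section Norms.
Variables (R : realType) (nS nA : nat).

Lemma norm1_row_le_norm21 (M : 'M[R]_(nS, nA)) s : \sum_a `|M s a| <= norm21 M.
Proof.
rewrite /norm21 -[X in X <= _]ger0_norm ?sumr_ge0 // -sqrtr_sqr ler_sqrt; last first.
  by rewrite sumr_ge0 // => i _; exact: sqr_ge0.
by rewrite (bigD1 s) //= lerDl sumr_ge0 // => i _; exact: sqr_ge0.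
Qed.

Lemma norm2inf_le_sum_max (M : 'M[R]_(nS, nA)) :
  norm2inf M <= \sum_s \big[Num.max/0]_a `|M s a|.
Proof.
rewrite /norm2inf -[X in _ <= X]ger0_norm ?sumr_ge0 // => [|s _]; last exact: bigmax_ge_id.
rewrite -sqrtr_sqr ler_sqrt ?sqr_ge0 // [X in _ <= X]expr2 mulr_suml.
apply: ler_sum => s _; rewrite expr2 ler_wpM2l ?bigmax_ge_id //.
by rewrite (bigD1 s) //= lerDl sumr_ge0 // => i _; exact: bigmax_ge_id.
Qed.

End Norms.

Section Lipschitz.
Variables (R : realType) (nS nA : nat).
Variables (P : 'I_nS -> 'I_nA -> 'I_nS -> R) (Rw : 'I_nS -> 'I_nA -> R) (gamma : R).
Hypotheses (kerP : is_kernel P) (Rw01 : forall s a, 0 <= Rw s a <= 1).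
Hypotheses (g0 : 0 <= gamma) (g1 : gamma < 1).
Variables (p : 'rV[R]_nS) (pi pi' : 'M[R]_(nS, nA)).
Hypotheses (pd : is_distr p) (pol : is_policy pi) (pol' : is_policy pi').

Let u := (1 - gamma)^-1.
Let N := norm21 (pi - pi').
Let d := occupancy P gamma p pi.
Let d' := occupancy P gamma p pi'.
Let v := state_value P Rw gamma pi.
Let v' := state_value P Rw gamma pi'.

Let u_ge0 : 0 <= u.
Proof. by rewrite invr_ge0 subr_ge0 ltW. Qed.

Let N_ge0 : 0 <= N.
Proof. exact: sqrtr_ge0. Qed.

Lemma abs_state_value_sub_le i : `|v i 0 - v' i 0| <= N * u * u.
Proof.
set z := rpi Rw (pi - pi') + gamma *: (Ppi P (pi - pi') *m v').
have zB j : `|z j 0| <= N * u.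
  rewrite bellman_rowE; apply: le_trans (ler_norm_sum _ _ _) _.
  apply: le_trans (_ : \sum_a `|(pi - pi') j a| * u <= _); last first.
    by rewrite -mulr_suml ler_wpM2r // norm1_row_le_norm21.
  apply: ler_sum => a _; rewrite normrM ler_wpM2l //.
  exact: (abs_action_value_le kerP Rw01 g0 g1 pol' j a).
have vE := fixpoint_sub (state_value_fixpoint Rw kerP g0 g1 pol)
  (state_value_fixpoint Rw kerP g0 g1 pol').
rewrite -rpiB -PpiB -/z in vE.
have := norminf_fixpoint_le (Ppi_stochastic kerP pol) g0 g1 (mulr_ge0 N_ge0 u_ge0) zB vE i.
by rewrite !mxE.
Qed.

Lemma abs_action_value_sub_le s a :
  `|action_value P Rw gamma pi s a - action_value P Rw gamma pi' s a| <= gamma * (N * u * u).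
Proof.
rewrite /action_value opprD addrACA subrr add0r -mulrBr -sumrB normrM ger0_norm // ler_wpM2l //.
under eq_bigr => j _ do rewrite -mulrBr.
exact: abs_kernel_mean_le kerP abs_state_value_sub_le.
Qed.

Lemma norm1_occupancy_sub_le : \sum_j `|(d - d') 0 j| <= gamma * N * u * u.
Proof.
have eE := row_fixpoint_sub (occupancy_fixpoint kerP g0 g1 p pol)
  (occupancy_fixpoint kerP g0 g1 p pol').
rewrite -PpiB in eE.
apply: le_trans (norm1_fixpoint_le (Ppi_stochastic kerP pol') g0 g1 eE) _.
rewrite ler_wpM2r //; under eq_bigr => j _ do rewrite mxE normrM ger0_norm //.
rewrite -mulr_sumr -mulrA ler_wpM2l //.
have PpiB_row i : \sum_j `|Ppi P (pi - pi') i j| <= N.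
  exact: le_trans (norm1_row_Ppi_le _ _ kerP) (norm1_row_le_norm21 _ _).
apply: le_trans (norm1_mulmx_le _ PpiB_row) _.
by rewrite ler_wpM2l // norm1_occupancy_le.
Qed.

Lemma max_abs_gradVp_sub_le s :
  \big[Num.max/0]_a `|(gradVp P Rw gamma p pi - gradVp P Rw gamma p pi') s a|
  <= `|(d - d') 0 s| * u + `|d' 0 s| * (gamma * (N * u * u)).
Proof.
apply: bigmax_le => [|a _]; first by rewrite addr_ge0 // !mulr_ge0.
rewrite !mxBE !gradVp_formula //.
set Q := action_value P Rw gamma pi s a; set Q' := action_value P Rw gamma pi' s a.
rewrite (_ : _ - _ = - ((d 0 s - d' 0 s) * Q + d' 0 s * (Q - Q'))); last by rewrite /d /d'; ring.
rewrite normrN; apply: le_trans (ler_normD _ _) _; rewrite !normrM.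
apply: lerD; apply: ler_wpM2l => //; first exact: abs_action_value_le.
exact: abs_action_value_sub_le.
Qed.

Lemma sum_max_abs_gradVp_sub_le :
  \sum_s \big[Num.max/0]_a `|(gradVp P Rw gamma p pi - gradVp P Rw gamma p pi') s a|
  <= 2 * gamma / (1 - gamma) ^+ 3 * N.
Proof.
apply: le_trans (ler_sum _ (fun s _ => max_abs_gradVp_sub_le s)) _.
rewrite big_split /= -!mulr_suml.
apply: le_trans (lerD (ler_wpM2r u_ge0 norm1_occupancy_sub_le)
  (ler_wpM2r _ (norm1_occupancy_le kerP g0 g1 pol' pd))) _; first by rewrite !mulr_ge0.
by rewrite le_eqVlt -exprVn -/u; apply/orP; left; apply/eqP; ring.
Qed.

End Lipschitz.

Theorem proposition1 (R : realType) (nS nA : nat)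
  (P : 'I_nS -> 'I_nA -> 'I_nS -> R) (Rw : 'I_nS -> 'I_nA -> R)
  (gamma : R) (p : 'rV[R]_nS) (pi pi' : 'M[R]_(nS, nA)) :
  is_kernel P ->
  (forall s a, 0 <= Rw s a <= 1) ->
  0 <= gamma -> gamma < 1 ->
  is_distr p ->
  is_policy pi -> is_policy pi' ->
  norm2inf (gradVp P Rw gamma p pi - gradVp P Rw gamma p pi')
    <= 2 * gamma / (1 - gamma) ^+ 3 * norm21 (pi - pi').
Proof.
move=> kerP Rw01 g0 g1 pd pol pol'.
exact: le_trans (norm2inf_le_sum_max _) (sum_max_abs_gradVp_sub_le kerP Rw01 g0 g1 pd pol pol').
Qed.
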